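(* Let $(X,\tau)$ be a zero-dimensional, perfect, compact $T_1$-space and let $(Y,\tau_d)$ be a dendrite with metric $d$. Then there exists a continuous, closed map $f$ of $X$ onto $Y$ such that the decomposition $\mathcal D_f=\{f^{-1}(y);\, y\in Y\}$ of $X$ is upper semicontinuous and the map $h:(Y,\tau_d)\to(\mathcal D_f,\tau(\mathcal D_f))$, $y\mapsto f^{-1}(y)$, is a homeomorphism. Consequently the decomposition space $(\mathcal D_f,\tau(\mathcal D_f))$ is metrizable by the metric $\rho(D,D')=d(h^{-1}(D),h^{-1}(D'))$ (i.e. $\tau(\mathcal D_f)=\tau_\rho$), and $(\mathcal D_f,\tau_\rho)$ is a dendrite.
   Context: A space is zero-dimensional if it has a base consisting of sets that are both closed and open (clopen). A space is perfect if it has no isolated points. A dendrite is a locally connected, connected, compact metric space containing no simple closed curve (no subspace homeomorphic to a circle). A decomposition $\mathcal D$ of a set $X$ is a collection of nonempty, pairwise disjoint subsets of $X$ whose union is $X$; for a topological space $(X,\tau)$ the decomposition topology is $\tau(\mathcal D)=\{\mathcal U\subset\mathcal D;\ \bigcup_{D\in\mathcal U}D\in\tau\}$, and $(\mathcal D,\tau(\mathcal D))$ is the decomposition space. A decomposition $\mathcal D$ is upper semicontinuous (usc) if for every $D\in\mathcal D$ and every open $U\supseteq D$ there is an open $u\supseteq D$ such that every $A\in\mathcal D$ with $A\cap u\neq\emptyset$ satisfies $A\subset U$. *)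

From Stdlib Require Import Reals List.
Open Scope R_scope.

Definition set (T : Type) := T -> Prop.

Definition is_topology {T : Type} (op : set T -> Prop) : Prop :=
  op (fun _ => True) /\ op (fun _ => False) /\
  (forall F : set T -> Prop, (forall U, F U -> op U) ->
      op (fun x => exists U, F U /\ U x)) /\
  (forall U V, op U -> op V -> op (fun x => U x /\ V x)).

Definition is_closed {T : Type} (op : set T -> Prop) (C : set T) : Prop :=
  op (fun x => ~ C x).

Definition clopen {T : Type} (op : set T -> Prop) (U : set T) : Prop :=
  op U /\ is_closed op U.

Definition T1_space {T : Type} (op : set T -> Prop) : Prop :=
  forall x y : T, x <> y -> exists U, op U /\ U x /\ ~ U y.

Definition zero_dimensional {T : Type} (op : set T -> Prop) : Prop :=
  forall U x, op U -> U x -> exists V, clopen op V /\ V x /\ (forall y, V y -> U y).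

Definition perfect {T : Type} (op : set T -> Prop) : Prop :=
  forall x : T, ~ op (fun y => y = x).

Definition compact_space {T : Type} (op : set T -> Prop) : Prop :=
  forall C : set T -> Prop,
    (forall U, C U -> op U) -> (forall x, exists U, C U /\ U x) ->
    exists l : list (set T), (forall U, In U l -> C U) /\
                             (forall x, exists U, In U l /\ U x).

Definition continuous {A B : Type} (opA : set A -> Prop) (opB : set B -> Prop)
  (f : A -> B) : Prop :=
  forall V, opB V -> opA (fun x => V (f x)).

Definition image {A B : Type} (f : A -> B) (C : set A) : set B :=
  fun y => exists x, C x /\ f x = y.

Definition closed_map {A B : Type} (opA : set A -> Prop) (opB : set B -> Prop)
  (f : A -> B) : Prop :=
  forall C, is_closed opA C -> is_closed opB (image f C).

Definition homeomorphism {A B : Type} (opA : set A -> Prop) (opB : set B -> Prop)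
  (h : A -> B) (g : B -> A) : Prop :=
  (forall a, g (h a) = a) /\ (forall b, h (g b) = b) /\
  continuous opA opB h /\ continuous opB opA g.

Definition homeomorphic {A B : Type} (opA : set A -> Prop) (opB : set B -> Prop) : Prop :=
  exists (h : A -> B) (g : B -> A), homeomorphism opA opB h g.

Definition subspace {T : Type} (op : set T -> Prop) (S : set T)
  : set {x : T | S x} -> Prop :=
  fun W => exists U, op U /\ forall z : {x : T | S x}, W z <-> U (proj1_sig z).

Definition connected_set {T : Type} (op : set T -> Prop) (S : set T) : Prop :=
  ~ exists U V, op U /\ op V /\
      (forall x, S x -> U x \/ V x) /\
      (exists x, S x /\ U x) /\ (exists x, S x /\ V x) /\
      (forall x, S x -> U x -> V x -> False).

Definition locally_connected {T : Type} (op : set T -> Prop) : Prop :=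
  forall U x, op U -> U x ->
    exists V, op V /\ V x /\ (forall y, V y -> U y) /\ connected_set op V.

Definition is_metric {T : Type} (d : T -> T -> R) : Prop :=
  (forall x y, d x y = 0 <-> x = y) /\
  (forall x y, d x y = d y x) /\
  (forall x y z, d x z <= d x y + d y z).

Definition metric_open {T : Type} (d : T -> T -> R) (U : set T) : Prop :=
  forall x, U x -> exists eps, 0 < eps /\ forall y, d x y < eps -> U y.

Definition euclid2 (p q : R * R) : R :=
  sqrt ((fst p - fst q) ^ 2 + (snd p - snd q) ^ 2).

Definition circle_set : set (R * R) :=
  fun p => fst p ^ 2 + snd p ^ 2 = 1.

Definition circle_top : set {p : R * R | circle_set p} -> Prop :=
  subspace (metric_open euclid2) circle_set.

Definition dendrite (T : Type) (d : T -> T -> R) : Prop :=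
  is_metric d /\ inhabited T /\
  compact_space (metric_open d) /\
  connected_set (metric_open d) (fun _ => True) /\
  locally_connected (metric_open d) /\
  ~ (exists A : set T, homeomorphic (subspace (metric_open d) A) circle_top).

Definition decomp_space {X : Type} (Dc : set (set X)) : Type :=
  {D : set X | Dc D}.

Definition decomp_top {X : Type} (tau : set X -> Prop) (Dc : set (set X))
  : set (decomp_space Dc) -> Prop :=
  fun U => tau (fun x => exists D : decomp_space Dc, U D /\ proj1_sig D x).

Definition usc {X : Type} (tau : set X -> Prop) (Dc : set (set X)) : Prop :=
  forall D U, Dc D -> tau U -> (forall x, D x -> U x) ->
    exists u, tau u /\ (forall x, D x -> u x) /\
      forall A, Dc A -> (exists x, A x /\ u x) -> forall x, A x -> U x.

Definition fiber {X Y : Type} (f : X -> Y) (y : Y) : set X := fun x => f x = y.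

Definition Dfib {X Y : Type} (f : X -> Y) : set (set X) :=
  fun D => exists y, D = fiber f y.

Definition hmap {X Y : Type} (f : X -> Y) (y : Y) : decomp_space (Dfib f) :=
  exist (Dfib f) (fiber f y) (ex_intro _ y eq_refl).

(* The map is the limit of a shrinking scheme.  A nonempty clopen subset of a perfect,
   zero-dimensional T1 space splits into any finite number of nonempty clopen pieces, and
   by compactness every nonempty closed subset of Y is covered by finitely many nonempty
   closed pieces of diameter at most eps.  Matching the two, every "cell" (P, K) of a
   clopen P and a closed K is refined into cells whose X-parts partition P and whose
   Y-parts cover K and are small.  Iterating with eps = 1/(n+1), each x lies in a nested
   sequence of cells whose Y-parts shrink to a single point f x; f is continuous and onto,
   hence closed as X is compact.  For a closed continuous surjection the fibres form an
   upper semicontinuous decomposition and y |-> f^-1(y) is a homeomorphism onto the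
   decomposition space, along which d is transported to a metric making it a dendrite. *)

From Stdlib Require Import Reals Lra Lia List Classical FunctionalExtensionality
  PropExtensionality ProofIrrelevance IndefiniteDescription ClassicalEpsilon.
Import ListNotations.
Open Scope R_scope.

Lemma set_ext {T} (U V : set T) : (forall x, U x <-> V x) -> U = V.
Proof.
  intros H; apply functional_extensionality; intros x.
  apply propositional_extensionality; auto.
Qed.

Lemma open_ext {T} (op : set T -> Prop) (U V : set T) :
  (forall x, U x <-> V x) -> op U -> op V.
Proof. intros H; rewrite (set_ext U V H); auto. Qed.

Lemma open_union2 {T} (op : set T -> Prop) (U V : set T) :
  is_topology op -> op U -> op V -> op (fun x => U x \/ V x).
Proof.
  intros [_ [_ [Hunion _]]] HU HV.
  apply (open_ext op (fun x => exists W, (W = U \/ W = V) /\ W x)).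
  - intros x; split.
    + intros [W [[-> | ->] Hx]]; auto.
    + intros [Hx | Hx]; eauto.
  - apply Hunion; intros W [-> | ->]; auto.
Qed.

Lemma open_of_locally_open {T} (op : set T -> Prop) (S : set T) : is_topology op ->
  (forall x, S x -> exists P, op P /\ P x /\ forall x', P x' -> S x') -> op S.
Proof.
  intros [_ [_ [Hunion _]]] H.
  apply (open_ext op (fun x => exists P, (op P /\ forall x', P x' -> S x') /\ P x)).
  - intros x; split.
    + intros [P [[_ HPS] Hx]]; auto.
    + intros Hx; destruct (H x Hx) as [P [HP [HPx HPS]]]; eauto.
  - apply Hunion; intros P [HP _]; auto.
Qed.

Lemma closed_compl {T} (op : set T -> Prop) (U : set T) :
  op U -> is_closed op (fun x => ~ U x).
Proof.
  unfold is_closed; apply open_ext; intros x; split; [auto | apply NNPP].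
Qed.

Lemma closed_inter {T} (op : set T -> Prop) (C C' : set T) : is_topology op ->
  is_closed op C -> is_closed op C' -> is_closed op (fun x => C x /\ C' x).
Proof.
  intros Ht HC HC'; unfold is_closed.
  apply (open_ext op (fun x => ~ C x \/ ~ C' x)); [intros x; tauto |].
  apply open_union2; auto.
Qed.

Lemma clopen_compl {T} (op : set T -> Prop) (U : set T) :
  clopen op U -> clopen op (fun x => ~ U x).
Proof. intros [HU HUc]; split; auto; apply closed_compl; auto. Qed.

Lemma clopen_inter {T} (op : set T -> Prop) (U V : set T) : is_topology op ->
  clopen op U -> clopen op V -> clopen op (fun x => U x /\ V x).
Proof.
  intros Ht [HU HUc] [HV HVc]; split.
  - apply Ht; auto.
  - apply closed_inter; auto.
Qed.

Lemma compact_indexed_subcover {T I} (op : set T -> Prop) (O : I -> set T) :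
  compact_space op -> (forall i, op (O i)) -> (forall x, exists i, O i x) ->
  exists is : list I, forall x, exists i, In i is /\ O i x.
Proof.
  intros Hc HO Hcov.
  destruct (Hc (fun U => exists i, U = O i)) as [l [Hl Hlcov]].
  - intros U [i ->]; auto.
  - intros x; destruct (Hcov x) as [i Hi]; eauto.
  - assert (Hidx : exists is, forall U, In U l -> exists i, In i is /\ U = O i).
    { clear Hlcov; induction l as [|U l IH].
      - exists []; intros U [].
      - destruct IH as [is His]; [intros V HV; apply Hl; right; auto |].
        destruct (Hl U (or_introl eq_refl)) as [i ->].
        exists (i :: is); intros V [<- | HV].
        + exists i; split; [left |]; auto.
        + destruct (His V HV) as [j [Hj ->]]; exists j; split; [right |]; auto. }
    destruct Hidx as [is His]; exists is; intros x.
    destruct (Hlcov x) as [U [HU Hx]]; destruct (His U HU) as [i [Hi ->]]; eauto.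
Qed.

Lemma In_le_list_max (ns : list nat) n : In n ns -> (n <= list_max ns)%nat.
Proof.
  intros Hn; assert (H := proj1 (list_max_le ns (list_max ns)) (le_n _)).
  rewrite Forall_forall in H; auto.
Qed.

Lemma compact_nested_closed {T} (op : set T -> Prop) (C : nat -> set T) :
  compact_space op -> (forall n, is_closed op (C n)) -> (forall n, exists x, C n x) ->
  (forall n x, C (S n) x -> C n x) -> exists x, forall n, C n x.
Proof.
  intros Hc HC Hne Hnest.
  assert (Hmono : forall n m, (n <= m)%nat -> forall x, C m x -> C n x)
    by (intros n m Hnm; induction Hnm; auto).
  apply NNPP; intros Hempty.
  destruct (compact_indexed_subcover op (fun n x => ~ C n x) Hc HC) as [ns Hns].
  - intros x; apply NNPP; intros Hx; apply Hempty; exists x.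
    intros n; apply NNPP; intros Hn; apply Hx; eauto.
  - destruct (Hne (list_max ns)) as [x Hx]; destruct (Hns x) as [n [Hn Hnx]].
    apply Hnx; apply (Hmono n (list_max ns)); auto; apply In_le_list_max; auto.
Qed.
Lemma inv_INR_S_pos n : 0 < / INR (S n).
Proof. apply Rinv_0_lt_compat, lt_0_INR; lia. Qed.

Lemma inv_INR_S_lt eps : 0 < eps -> exists n, / INR (S n) < eps.
Proof.
  intros He; destruct (archimed_cor1 eps He) as [[|n] [Hn Hpos]]; [lia | eauto].
Qed.

Section Metric.
Variables (T : Type) (d : T -> T -> R).
Hypothesis Hm : is_metric d.

Lemma metric_refl x : d x x = 0.
Proof. apply Hm; auto. Qed.

Lemma metric_nonneg x y : 0 <= d x y.
Proof.
  destruct Hm as [_ [Hsym Htri]]; pose proof (Htri x y x).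
  rewrite (Hsym y x), metric_refl in H; lra.
Qed.

Lemma metric_eq_of_le_inv x y : (forall n, d x y <= / INR (S n)) -> x = y.
Proof.
  intros Hsmall; apply Hm.
  destruct (Rle_lt_or_eq_dec 0 (d x y) (metric_nonneg x y)) as [Hpos | Hzero]; auto.
  destruct (inv_INR_S_lt _ Hpos) as [n Hn]; specialize (Hsmall n); lra.
Qed.

Lemma metric_open_topology : is_topology (metric_open d).
Proof.
  split; [| split; [| split]].
  - intros x _; exists 1; split; [lra | auto].
  - intros x [].
  - intros F HF x [U [HU Hx]]; destruct (HF U HU x Hx) as [e [He Hball]].
    exists e; split; eauto.
  - intros U V HU HV x [HUx HVx].
    destruct (HU x HUx) as [e [He HeU]], (HV x HVx) as [e' [He' He'V]].
    exists (Rmin e e'); split; [apply Rmin_glb_lt; auto |].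
    intros y Hy; split; [apply HeU | apply He'V];
      eapply Rlt_le_trans; eauto; [apply Rmin_l | apply Rmin_r].
Qed.

Lemma ball_open c r : metric_open d (fun y => d c y < r).
Proof.
  intros x Hx; exists (r - d c x); split; [lra |].
  intros y Hy; destruct Hm as [_ [_ Htri]]; pose proof (Htri c x y); lra.
Qed.

Lemma cball_closed c r : is_closed (metric_open d) (fun y => d c y <= r).
Proof.
  intros x Hx; exists (d c x - r); split; [lra |].
  intros y Hy; destruct Hm as [_ [Hsym Htri]]; pose proof (Htri c y x).
  rewrite (Hsym y x) in H; lra.
Qed.

End Metric.

Section ClopenPartition.
Variables (X : Type) (tau : set X -> Prop).
Hypotheses (Ht : is_topology tau) (Hzd : zero_dimensional tau) (Hperf : perfect tau)
  (HT1 : T1_space tau).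

(* Perfectness gives a second point of [P]; a clopen neighbourhood of one point
   missing the other cuts [P] in two. *)
Lemma clopen_split (P : set X) : clopen tau P -> (exists x, P x) ->
  exists Q1 Q2, clopen tau Q1 /\ clopen tau Q2 /\ (exists x, Q1 x) /\ (exists x, Q2 x) /\
    (forall x, P x <-> Q1 x \/ Q2 x) /\ (forall x, Q1 x -> Q2 x -> False).
Proof.
  intros HP [x0 Hx0].
  assert (Hx1 : exists x1, P x1 /\ x1 <> x0).
  { apply NNPP; intros Hsingle; apply (Hperf x0).
    apply (open_ext tau P); [| apply HP].
    intros x; split; [| intros ->; auto].
    intros Hx; apply NNPP; intros Hne; apply Hsingle; eauto. }
  destruct Hx1 as [x1 [Hx1 Hne]].
  destruct (HT1 x0 x1 (not_eq_sym Hne)) as [U [HU [HUx0 HUx1]]].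
  destruct (Hzd U x0 HU HUx0) as [V [HV [HVx0 HVU]]].
  exists (fun x => P x /\ V x), (fun x => P x /\ ~ V x).
  split; [apply clopen_inter; auto |].
  split; [apply clopen_inter, clopen_compl; auto |].
  split; [eauto |]; split; [exists x1; split; auto |].
  split; intros x; tauto.
Qed.

Lemma clopen_partition {L : Type} (ls : list L) : forall (k : L) (P : set X),
  clopen tau P -> (exists x, P x) ->
  exists F : set (set X * L),
    (forall c, F c -> (exists x, fst c x) /\ clopen tau (fst c) /\
                      (forall x, fst c x -> P x) /\ In (snd c) (k :: ls)) /\
    (forall c1 c2, F c1 -> F c2 -> (exists x, fst c1 x /\ fst c2 x) -> c1 = c2) /\
    (forall x, P x -> exists c, F c /\ fst c x) /\
    (forall l, In l (k :: ls) -> exists c, F c /\ snd c = l).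
Proof.
  induction ls as [|k2 ls IH]; intros k P HP HPne.
  - exists (fun c => c = (P, k)).
    split; [intros c ->; simpl; auto |].
    split; [intros c1 c2 -> ->; auto |].
    split; [intros x Hx; exists (P, k); auto |].
    intros l [<- | []]; exists (P, k); auto.
  - destruct (clopen_split P HP HPne)
      as [Q1 [Q2 [HQ1 [HQ2 [HQ1ne [HQ2ne [HPQ Hdisj]]]]]]].
    destruct (IH k2 Q2 HQ2 HQ2ne) as [F [Hcell [Huniq [Hcov Hlab]]]].
    exists (fun c => c = (Q1, k) \/ F c).
    split; [| split; [| split]].
    + intros c [-> | Hc]; simpl.
      * split; [| split; [| split]]; auto; intros x Hx; apply HPQ; auto.
      * destruct (Hcell c Hc) as [Hne [Hcl [Hsub Hin]]].
        split; [| split; [| split]]; auto.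
        intros x Hx; apply HPQ; auto.
    + intros c1 c2 [-> | H1] [-> | H2] [x [Hx1 Hx2]]; simpl in *; auto.
      * exfalso; apply (Hdisj x); auto; apply (Hcell c2); auto.
      * exfalso; apply (Hdisj x); auto; apply (Hcell c1); auto.
      * apply Huniq; eauto.
    + intros x Hx; apply HPQ in Hx as [Hx | Hx].
      * exists (Q1, k); auto.
      * destruct (Hcov x Hx) as [c [Hc Hcx]]; eauto.
    + intros l [<- | Hl]; [exists (Q1, k); auto |].
      destruct (Hlab l Hl) as [c [Hc Hcl]]; eauto.
Qed.

End ClopenPartition.

Lemma closed_cover_small_diam {Y} (d : Y -> Y -> R) (K : set Y) (eps : R) :
  is_metric d -> compact_space (metric_open d) ->
  is_closed (metric_open d) K -> (exists y, K y) -> 0 < eps ->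
  exists k ks, (forall k', In k' (k :: ks) ->
                  is_closed (metric_open d) k' /\ (exists y, k' y) /\
                  (forall y, k' y -> K y) /\ (forall y y', k' y -> k' y' -> d y y' <= eps)) /\
               (forall y, K y -> exists k', In k' (k :: ks) /\ k' y).
Proof.
  intros Hm Hc HK [y0 Hy0] He.
  destruct (compact_indexed_subcover (metric_open d)
              (fun c : {c | K c} => fun y => d (proj1_sig c) y < eps / 2 \/ ~ K y) Hc)
    as [cs Hcs].
  - intros c; apply open_union2; [apply metric_open_topology | apply ball_open |]; auto.
  - intros y; destruct (classic (K y)) as [Hy | Hy].
    + exists (exist K y Hy); left; simpl; rewrite metric_refl; auto; lra.
    + exists (exist K y0 Hy0); auto.
  - set (piece := fun c : {c | K c} => fun y => K y /\ d (proj1_sig c) y <= eps / 2).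
    assert (Hcover : forall y, K y -> exists c, In c cs /\ piece c y).
    { intros y Hy; destruct (Hcs y) as [c [Hc' [Hyc | Hn]]]; [| contradiction].
      exists c; split; [| split]; auto; lra. }
    destruct cs as [|c cs]; [destruct (Hcover y0 Hy0) as [_ [[] _]] |].
    exists (piece c), (map piece cs); split.
    + intros k' Hk'; change (In k' (map piece (c :: cs))) in Hk'.
      apply in_map_iff in Hk' as [[c' Hc'] [<- _]]; unfold piece; simpl.
      split; [| split; [| split]].
      * apply closed_inter; [apply metric_open_topology | | apply cball_closed]; auto.
      * exists c'; split; auto; rewrite metric_refl; auto; lra.
      * intros y [Hy _]; auto.
      * intros y y' [_ Hy] [_ Hy']; destruct Hm as [_ [Hsym Htri]].
        pose proof (Htri y c' y'); rewrite (Hsym y c') in H; lra.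
    + intros y Hy; destruct (Hcover y Hy) as [c' [Hc' Hyc']].
      exists (piece c'); split; auto; apply (in_map piece (c :: cs)); auto.
Qed.

Definition shrinking_scheme {X Y : Type} (tau : set X -> Prop) (d : Y -> Y -> R)
  (K : nat -> X -> set Y) : Prop :=
  (forall n x, is_closed (metric_open d) (K n x) /\ exists y, K n x y) /\
  (forall n x y, K (S n) x y -> K n x y) /\
  (forall n x y y', K (S n) x y -> K (S n) x y' -> d y y' <= / INR (S n)) /\
  (forall n x, exists P, tau P /\ P x /\ forall x', P x' -> K n x' = K n x) /\
  (forall n y, exists x, K n x y).

Section SchemeConstruction.
Variables (X : Type) (tau : set X -> Prop) (Y : Type) (d : Y -> Y -> R).
Hypotheses (Ht : is_topology tau) (Hzd : zero_dimensional tau) (Hperf : perfect tau)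
  (HT1 : T1_space tau) (HX : inhabited X).
Hypotheses (Hm : is_metric d) (HcY : compact_space (metric_open d)) (HY : inhabited Y).

(* A cell pairs a clopen piece of [X] with the closed piece of [Y] it is to be mapped onto. *)
Definition admissible (c : set X * set Y) : Prop :=
  (exists x, fst c x) /\ clopen tau (fst c) /\
  is_closed (metric_open d) (snd c) /\ (exists y, snd c y).

Definition is_refinement (c : set X * set Y) (eps : R) (F : set (set X * set Y)) : Prop :=
  (forall c', F c' -> admissible c') /\
  (forall c', F c' -> (forall x, fst c' x -> fst c x) /\ (forall y, snd c' y -> snd c y)) /\
  (forall c1 c2, F c1 -> F c2 -> (exists x, fst c1 x /\ fst c2 x) -> c1 = c2) /\
  (forall x, fst c x -> exists c', F c' /\ fst c' x) /\
  (forall y, snd c y -> exists c', F c' /\ snd c' y) /\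
  (forall c', F c' -> forall y y', snd c' y -> snd c' y' -> d y y' <= eps).

Lemma refinement_exists c eps : admissible c -> 0 < eps -> exists F, is_refinement c eps F.
Proof.
  destruct c as [P K]; intros [HPne [HP [HK HKne]]] He; simpl in *.
  destruct (closed_cover_small_diam d K eps Hm HcY HK HKne He) as [k [ks [Hks Hcov]]].
  destruct (clopen_partition X tau Ht Hzd Hperf HT1 ks k P HP HPne)
    as [F [Hcell [Huniq [HcovX Hlab]]]].
  exists F; split; [| split; [| split; [| split; [| split]]]]; simpl; auto.
  - intros c' Hc'; destruct (Hcell c' Hc') as [? [? [_ Hin]]].
    destruct (Hks _ Hin) as [? [? _]]; split; auto.
  - intros c' Hc'; destruct (Hcell c' Hc') as [_ [_ [HsubX Hin]]].
    split; auto; apply (Hks _ Hin).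
  - intros y Hy; destruct (Hcov y Hy) as [k' [Hk' Hyk']].
    destruct (Hlab k' Hk') as [c' [Hc' <-]]; eauto.
  - intros c' Hc'; destruct (Hcell c' Hc') as [_ [_ [_ Hin]]]; apply (Hks _ Hin).
Qed.

Definition refinement (c : set X * set Y) (eps : R) : set (set X * set Y) :=
  epsilon (inhabits (fun _ => False)) (is_refinement c eps).

Definition next_cell (eps : R) (c : set X * set Y) (x : X) : set X * set Y :=
  epsilon (inhabits c) (fun c' => refinement c eps c' /\ fst c' x).

Lemma next_cell_spec eps c x : admissible c -> 0 < eps -> fst c x ->
  is_refinement c eps (refinement c eps) /\
  refinement c eps (next_cell eps c x) /\ fst (next_cell eps c x) x.
Proof.
  intros Hc He Hx.
  assert (HF : is_refinement c eps (refinement c eps))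
    by (unfold refinement; apply epsilon_spec, refinement_exists; auto).
  split; auto; unfold next_cell; apply epsilon_spec.
  destruct HF as [_ [_ [_ [HcovX _]]]]; auto.
Qed.

Fixpoint cell (n : nat) (x : X) : set X * set Y :=
  match n with
  | O => (fun _ => True, fun _ => True)
  | S m => next_cell (/ INR (S m)) (cell m x) x
  end.

Lemma cell_spec n : forall x, admissible (cell n x) /\ fst (cell n x) x /\
  forall x', fst (cell n x) x' -> cell n x' = cell n x.
Proof.
  induction n as [|n IH]; intros x.
  - destruct HX as [x0], HY as [y0]; simpl.
    split; [| split; auto].
    split; [exists x0; exact I | split; [split | split]].
    + apply Ht.
    + unfold is_closed; apply (open_ext tau (fun _ => False)); [simpl; tauto | apply Ht].
    + intros y Hy; simpl in Hy; tauto.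
    + exists y0; exact I.
  - destruct (IH x) as [Hc [Hx Hloc]].
    destruct (next_cell_spec (/ INR (S n)) _ x Hc (inv_INR_S_pos n) Hx)
      as [[Hadm [Hsub [Huniq _]]] [HF Hx']]; simpl.
    split; [auto | split; [auto |]].
    intros x' Hx''.
    assert (Hx'c : fst (cell n x) x') by (apply (Hsub _ HF); auto).
    rewrite (Hloc x' Hx'c).
    destruct (next_cell_spec (/ INR (S n)) _ x' Hc (inv_INR_S_pos n) Hx'c)
      as [_ [HF' Hx''']].
    apply Huniq; eauto.
Qed.

Lemma cell_S_refines n x :
  is_refinement (cell n x) (/ INR (S n)) (refinement (cell n x) (/ INR (S n))) /\
  refinement (cell n x) (/ INR (S n)) (cell (S n) x).
Proof.
  destruct (cell_spec n x) as [Hc [Hx _]].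
  destruct (next_cell_spec (/ INR (S n)) _ x Hc (inv_INR_S_pos n) Hx) as [? [? _]]; auto.
Qed.

Lemma cell_S_eq n x c' x' : refinement (cell n x) (/ INR (S n)) c' -> fst c' x' ->
  cell (S n) x' = c'.
Proof.
  intros Hc' Hx'; destruct (cell_S_refines n x) as [[_ [Hsub [Huniq _]]] _].
  destruct (cell_spec n x) as [_ [_ Hloc]].
  assert (Hx'c : fst (cell n x) x') by (apply (Hsub _ Hc'); auto).
  destruct (cell_S_refines n x') as [_ HF']; rewrite (Hloc x' Hx'c) in HF'.
  apply Huniq; auto; exists x'; split; auto; apply cell_spec.
Qed.

Lemma shrinking_scheme_exists : exists K, shrinking_scheme tau d K.
Proof.
  exists (fun n x => snd (cell n x)).
  split; [| split; [| split; [| split]]].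
  - intros n x; destruct (cell_spec n x) as [[_ [_ [? ?]]] _]; auto.
  - intros n x y; destruct (cell_S_refines n x) as [[_ [Hsub _]] HF]; apply (Hsub _ HF).
  - intros n x; destruct (cell_S_refines n x) as [[_ [_ [_ [_ [_ Hdiam]]]]] HF].
    apply Hdiam; auto.
  - intros n x; destruct (cell_spec n x) as [[_ [[HP _] _]] [Hx Hloc]].
    exists (fst (cell n x)); split; [| split]; auto.
    intros x' Hx'; rewrite (Hloc x' Hx'); auto.
  - intros n; induction n as [|n IH]; intros y.
    + destruct HX as [x0]; exists x0; exact I.
    + destruct (IH y) as [x Hy].
      destruct (cell_S_refines n x) as [[Hadm [_ [_ [_ [HcovY _]]]]] _].
      destruct (HcovY y Hy) as [c' [Hc' Hyc']].
      destruct (Hadm c' Hc') as [[x' Hx'] _].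
      exists x'; rewrite (cell_S_eq n x c' x'); auto.
Qed.

End SchemeConstruction.

Section SchemeLimit.
Variables (X : Type) (tau : set X -> Prop) (Y : Type) (d : Y -> Y -> R)
  (K : nat -> X -> set Y).
Hypotheses (Ht : is_topology tau) (Hc : compact_space tau).
Hypotheses (Hm : is_metric d) (HcY : compact_space (metric_open d)).
Hypothesis HK : shrinking_scheme tau d K.

Lemma scheme_point_unique x y y' : (forall n, K n x y) -> (forall n, K n x y') -> y = y'.
Proof.
  destruct HK as [_ [_ [Hdiam _]]]; intros Hy Hy'.
  apply (metric_eq_of_le_inv Y d Hm); intros n; apply (Hdiam n x); auto.
Qed.

Lemma scheme_limit_exists : exists f : X -> Y, forall x n, K n x (f x).
Proof.
  destruct HK as [Hcl [Hnest _]].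
  assert (Hpt : forall x, exists y, forall n, K n x y).
  { intros x; apply (compact_nested_closed (metric_open d)); auto.
    - intros n; exact (proj1 (Hcl n x)).
    - intros n; exact (proj2 (Hcl n x)). }
  exists (fun x => proj1_sig (constructive_indefinite_description _ (Hpt x))).
  intros x; exact (proj2_sig (constructive_indefinite_description _ (Hpt x))).
Qed.

Lemma scheme_section_closed n y : is_closed tau (fun x => K n x y).
Proof.
  destruct HK as [_ [_ [_ [Hloc _]]]].
  unfold is_closed; apply open_of_locally_open; auto; intros x Hx.
  destruct (Hloc n x) as [P [HP [HPx HPK]]]; exists P; split; [| split]; auto.
  intros x' Hx'; rewrite (HPK x' Hx'); auto.
Qed.

Variable f : X -> Y.
Hypothesis Hf : forall x n, K n x (f x).

Lemma scheme_limit_continuous : continuous tau (metric_open d) f.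
Proof.
  destruct HK as [_ [_ [Hdiam [Hloc _]]]].
  intros V HV; apply open_of_locally_open; auto; intros x Hx.
  destruct (HV (f x) Hx) as [e [He HVe]].
  destruct (inv_INR_S_lt e He) as [n Hn].
  destruct (Hloc (S n) x) as [P [HP [HPx HPK]]]; exists P; split; [| split]; auto.
  intros x' Hx'; apply HVe.
  assert (Hfx' := Hf x' (S n)); rewrite (HPK x' Hx') in Hfx'.
  pose proof (Hdiam n x _ _ (Hf x (S n)) Hfx'); lra.
Qed.

Lemma scheme_limit_surjective y : exists x, f x = y.
Proof.
  destruct HK as [_ [Hnest [_ [_ Hsurj]]]].
  destruct (compact_nested_closed tau (fun n x => K n x y) Hc) as [x Hx].
  - intros n; apply scheme_section_closed.
  - intros n; apply Hsurj.
  - intros n x; apply Hnest.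
  - exists x; apply (scheme_point_unique x); auto.
Qed.

End SchemeLimit.

Lemma closed_map_of_compact {X Y} (tau : set X -> Prop) (d : Y -> Y -> R) (f : X -> Y) :
  is_topology tau -> compact_space tau -> is_metric d -> continuous tau (metric_open d) f ->
  closed_map tau (metric_open d) f.
Proof.
  intros Ht Hc Hm Hf C HC y Hy.
  set (Cn := fun n x => C x /\ d y (f x) <= / INR (S n)).
  destruct (classic (forall n, exists x, Cn n x)) as [Hne | Hempty].
  - exfalso; destruct (compact_nested_closed tau Cn Hc) as [x Hx]; auto.
    + intros n; apply closed_inter; auto; exact (Hf _ (cball_closed Y d Hm y _)).
    + intros n x [HCx Hdx]; split; auto; eapply Rle_trans; [apply Hdx |].
      apply Rinv_le_contravar; [apply lt_0_INR; lia | apply le_INR; lia].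
    + apply Hy; exists x; split; [apply (Hx 0%nat) |].
      symmetry; apply (metric_eq_of_le_inv Y d Hm); intros n; apply (Hx n).
  - apply not_all_ex_not in Hempty as [n Hn].
    exists (/ INR (S n)); split; [apply inv_INR_S_pos |].
    intros y' Hy' [x [HCx <-]]; apply Hn; exists x; split; auto; lra.
Qed.

Lemma usc_of_closed_map {X Y} (tau : set X -> Prop) (opY : set Y -> Prop) (f : X -> Y) :
  continuous tau opY f -> closed_map tau opY f -> usc tau (Dfib f).
Proof.
  intros Hf Hcl D U [y ->] HU HDU.
  exists (fun x => ~ image f (fun x => ~ U x) (f x)); split; [| split].
  - exact (Hf _ (Hcl _ (closed_compl tau U HU))).
  - intros x Hx [x' [Hx' Hfx']]; apply Hx', HDU; unfold fiber in *; congruence.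
  - intros A [y' ->] [x1 [Hx1 Hu]] x Hx; apply NNPP; intros Hn; apply Hu.
    exists x; split; auto; unfold fiber in *; congruence.
Qed.

Definition fiber_index {X Y} (f : X -> Y) (D : decomp_space (Dfib f)) : Y :=
  proj1_sig (constructive_indefinite_description _ (proj2_sig D)).

Section FiberHomeomorphism.
Variables (X : Type) (tau : set X -> Prop) (Y : Type) (opY : set Y -> Prop) (f : X -> Y).
Hypotheses (Hf : continuous tau opY f) (Hcl : closed_map tau opY f)
  (Hsurj : forall y, exists x, f x = y).

Lemma fiber_index_spec D : proj1_sig D = fiber f (fiber_index f D).
Proof. exact (proj2_sig (constructive_indefinite_description _ (proj2_sig D))). Qed.

Lemma hmap_fiber_index D : hmap f (fiber_index f D) = D.
Proof.
  apply eq_sig_hprop; [intros; apply proof_irrelevance |].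
  simpl; symmetry; apply fiber_index_spec.
Qed.

Lemma fiber_index_hmap y : fiber_index f (hmap f y) = y.
Proof.
  destruct (Hsurj y) as [x Hx].
  assert (Hfib : fiber f (fiber_index f (hmap f y)) x)
    by (rewrite <- fiber_index_spec; exact Hx).
  unfold fiber in Hfib; congruence.
Qed.

Lemma decomp_point_iff (V : set (decomp_space (Dfib f))) x :
  (exists D : decomp_space (Dfib f), V D /\ proj1_sig D x) <-> V (hmap f (f x)).
Proof.
  split.
  - intros [D [HD Hx]]; rewrite fiber_index_spec in Hx; unfold fiber in Hx.
    rewrite Hx, hmap_fiber_index; auto.
  - intros HV; exists (hmap f (f x)); split; simpl; auto; reflexivity.
Qed.

(* [hmap f] is continuous because saturated open sets have open images under the
   closed surjection [f]. *)
Lemma fiber_homeomorphism :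
  homeomorphism opY (decomp_top tau (Dfib f)) (hmap f) (fiber_index f).
Proof.
  split; [exact fiber_index_hmap | split; [exact hmap_fiber_index | split]].
  - intros V HV; unfold decomp_top in HV.
    apply (open_ext tau _ (fun x => V (hmap f (f x))) (decomp_point_iff V)) in HV.
    apply (open_ext opY (fun y => ~ image f (fun x => ~ V (hmap f (f x))) y));
      [| exact (Hcl _ (closed_compl tau _ HV))].
    intros y; split.
    + intros Hy; apply NNPP; intros HVy; apply Hy.
      destruct (Hsurj y) as [x <-]; exists x; auto.
    + intros HVy [x [HVx <-]]; auto.
  - intros V HV; unfold decomp_top.
    apply (open_ext tau (fun x => V (f x))); [| exact (Hf V HV)].
    intros x; rewrite decomp_point_iff, fiber_index_hmap; tauto.
Qed.

End FiberHomeomorphism.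

Lemma homeomorphic_trans {A B C} (opA : set A -> Prop) (opB : set B -> Prop)
  (opC : set C -> Prop) :
  homeomorphic opA opB -> homeomorphic opB opC -> homeomorphic opA opC.
Proof.
  intros [h [g [Hgh [Hhg [Hh Hg]]]]] [h' [g' [Hgh' [Hhg' [Hh' Hg']]]]].
  exists (fun a => h' (h a)), (fun c => g (g' c)).
  split; [| split; [| split]].
  - intros a; rewrite Hgh'; auto.
  - intros c; rewrite Hhg; auto.
  - intros V HV; exact (Hh _ (Hh' V HV)).
  - intros V HV; exact (Hg' _ (Hg V HV)).
Qed.

Section Transport.
Variables (A B : Type) (phi : A -> B) (psi : B -> A).
Hypotheses (Hpp : forall a, psi (phi a) = a) (Hqq : forall b, phi (psi b) = b).
Variables (opA : set A -> Prop) (opB : set B -> Prop).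
Hypothesis Hopen : forall U, opB U <-> opA (fun a => U (phi a)).

Lemma transport_open_inv (V : set A) : opA V -> opB (fun b => V (psi b)).
Proof.
  intros HV; apply Hopen; apply (open_ext opA V); auto.
  intros a; rewrite Hpp; tauto.
Qed.

Lemma compact_transport : compact_space opA -> compact_space opB.
Proof.
  intros Hc C HC Hcov.
  destruct (compact_indexed_subcover opA
              (fun U : {U | C U} => fun a => proj1_sig U (phi a)) Hc)
    as [Us HUs].
  - intros [U HU]; apply Hopen, HC; auto.
  - intros a; destruct (Hcov (phi a)) as [U [HU Ha]]; exists (exist C U HU); auto.
  - exists (map (@proj1_sig _ C) Us); split.
    + intros U HU; apply in_map_iff in HU as [[U' HU'] [<- _]]; auto.
    + intros b; destruct (HUs (psi b)) as [[U HU] [Hin Hb]]; simpl in Hb.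
      rewrite Hqq in Hb; exists U; split; auto.
      apply (in_map (@proj1_sig _ C) Us (exist C U HU)); auto.
Qed.

Lemma connected_transport (S : set A) :
  connected_set opA S -> connected_set opB (fun b => S (psi b)).
Proof.
  intros Hcon [U [V [HU [HV [Hcov [[b1 [Sb1 Ub1]] [[b2 [Sb2 Vb2]] Hdisj]]]]]]].
  apply Hcon; exists (fun a => U (phi a)), (fun a => V (phi a)).
  split; [apply Hopen; auto |]; split; [apply Hopen; auto |].
  split; [intros a Ha; apply Hcov; rewrite Hpp; auto |].
  split; [exists (psi b1); rewrite Hqq; auto |].
  split; [exists (psi b2); rewrite Hqq; auto |].
  intros a Ha HUa HVa; apply (Hdisj (phi a)); auto; rewrite Hpp; auto.
Qed.

Lemma locally_connected_transport : locally_connected opA -> locally_connected opB.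
Proof.
  intros Hlc U b HU Hb.
  destruct (Hlc _ (psi b) (proj1 (Hopen U) HU)) as [V [HV [HVb [HVU HVcon]]]];
    [rewrite Hqq; auto |].
  exists (fun b => V (psi b)); split; [| split; [| split]].
  - apply transport_open_inv; auto.
  - auto.
  - intros b' Hb'; rewrite <- (Hqq b'); auto.
  - apply connected_transport; auto.
Qed.

Lemma subspace_homeomorphic_transport (S : set B) :
  homeomorphic (subspace opA (fun a => S (phi a))) (subspace opB S).
Proof.
  assert (HS : forall b, S b -> S (phi (psi b))) by (intros b; rewrite Hqq; auto).
  exists (fun z : {a | S (phi a)} => exist S (phi (proj1_sig z)) (proj2_sig z)).
  exists (fun z : {b | S b} =>
            exist (fun a => S (phi a)) (psi (proj1_sig z)) (HS _ (proj2_sig z))).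
  split; [| split; [| split]].
  - intros z; apply eq_sig_hprop; [intros; apply proof_irrelevance | apply Hpp].
  - intros z; apply eq_sig_hprop; [intros; apply proof_irrelevance | apply Hqq].
  - intros W [U [HU HW]]; exists (fun a => U (phi a)); split; [apply Hopen; auto |].
    intros z; rewrite HW; tauto.
  - intros W [U [HU HW]]; exists (fun b => U (psi b)).
    split; [apply transport_open_inv; auto |].
    intros z; rewrite HW; tauto.
Qed.

End Transport.

Section MetricPullback.
Variables (A B : Type) (dA : A -> A -> R) (phi : A -> B) (psi : B -> A).
Hypotheses (Hpp : forall a, psi (phi a) = a) (Hqq : forall b, phi (psi b) = b).

Lemma is_metric_pullback : is_metric dA -> is_metric (fun b b' => dA (psi b) (psi b')).
Proof.
  intros [Hzero [Hsym Htri]]; split; [| split]; intros; auto.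
  split.
  - intros H; apply Hzero in H; rewrite <- (Hqq x), <- (Hqq y), H; auto.
  - intros ->; apply Hzero; auto.
Qed.

Lemma metric_open_pullback U :
  metric_open (fun b b' => dA (psi b) (psi b')) U <-> metric_open dA (fun a => U (phi a)).
Proof.
  split.
  - intros H a Ha; destruct (H (phi a) Ha) as [e [He Hball]]; exists e; split; auto.
    intros a' Ha'; apply Hball; rewrite !Hpp; auto.
  - intros H b Hb; destruct (H (psi b)) as [e [He Hball]]; [rewrite Hqq; auto |].
    exists e; split; auto; intros b' Hb'; rewrite <- (Hqq b'); apply Hball; auto.
Qed.

Lemma homeomorphism_metric_open (opB : set B -> Prop) :
  homeomorphism (metric_open dA) opB phi psi ->
  forall U, opB U <-> metric_open (fun b b' => dA (psi b) (psi b')) U.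
Proof.
  intros [_ [_ [Hphi Hpsi]]] U; rewrite metric_open_pullback; split; [apply Hphi |].
  intros HU; apply (open_ext opB (fun b => U (phi (psi b)))); [| exact (Hpsi _ HU)].
  intros b; rewrite Hqq; tauto.
Qed.

Lemma dendrite_pullback : dendrite A dA -> dendrite B (fun b b' => dA (psi b) (psi b')).
Proof.
  intros [Hm [[a0] [Hc [Hcon [Hlc Hcircle]]]]].
  pose proof metric_open_pullback as Hopen.
  split; [apply is_metric_pullback; auto |].
  split; [exact (inhabits (phi a0)) |].
  split; [exact (compact_transport A B phi psi Hqq _ _ Hopen Hc) |].
  split; [exact (connected_transport A B phi psi Hpp Hqq _ _ Hopen _ Hcon) |].
  split; [exact (locally_connected_transport A B phi psi Hpp Hqq _ _ Hopen Hlc) |].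
  intros [S HS]; apply Hcircle; exists (fun a => S (phi a)).
  eapply homeomorphic_trans; [| exact HS].
  apply (subspace_homeomorphic_transport A B phi psi Hpp Hqq); auto.
Qed.

End MetricPullback.

Theorem mainTheorem1 (X : Type) (tau : set X -> Prop) (Y : Type) (d : Y -> Y -> R)
  (Htop : is_topology tau) (Hne : inhabited X)
  (Hzd : zero_dimensional tau) (Hperf : perfect tau) (Hcpt : compact_space tau)
  (HT1 : T1_space tau) (Hden : dendrite Y d) :
  exists f : X -> Y,
    continuous tau (metric_open d) f /\
    closed_map tau (metric_open d) f /\
    (forall y, exists x, f x = y) /\
    usc tau (Dfib f) /\
    exists g : decomp_space (Dfib f) -> Y,
      homeomorphism (metric_open d) (decomp_top tau (Dfib f)) (hmap f) g /\
      let rho := fun D D' => d (g D) (g D') in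
      is_metric rho /\
      (forall U, decomp_top tau (Dfib f) U <-> metric_open rho U) /\
      dendrite (decomp_space (Dfib f)) rho.
Proof.
  pose proof Hden as [Hm [HY [HcY _]]].
  destruct (shrinking_scheme_exists X tau Y d Htop Hzd Hperf HT1 Hne Hm HcY HY) as [K HK].
  destruct (scheme_limit_exists X tau Y d K HcY HK) as [f Hf].
  assert (Hcont : continuous tau (metric_open d) f)
    by exact (scheme_limit_continuous X tau Y d K Htop HK f Hf).
  assert (Hsurj : forall y, exists x, f x = y)
    by exact (scheme_limit_surjective X tau Y d K Htop Hcpt Hm HK f Hf).
  assert (Hclosed : closed_map tau (metric_open d) f)
    by (apply closed_map_of_compact; auto).
  pose proof (fiber_homeomorphism X tau Y _ f Hcont Hclosed Hsurj) as Hhomeo.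
  pose proof Hhomeo as [Hhg [Hgh _]].
  exists f; split; [| split; [| split; [| split]]]; auto.
  - exact (usc_of_closed_map tau _ f Hcont Hclosed).
  - exists (fiber_index f); split; [exact Hhomeo |]; intros rho.
    split; [| split].
    + exact (is_metric_pullback _ _ d _ _ Hgh Hm).
    + exact (homeomorphism_metric_open _ _ d _ _ Hhg Hgh _ Hhomeo).
    + exact (dendrite_pullback _ _ d _ _ Hhg Hgh Hden).
Qed.
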